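(* Let $\mathcal{L}$ be a triangulation of a closed 3-manifold $\mathcal{M}^3$ with a branching structure, and consider three copies $i=1,2,3$ of the $\mathbb{Z}_2$ toric code on $\mathcal{L}$ as described in the context. Define the constant-depth circuit $$U=\prod_{[v_0v_1v_2v_3]\in\mathcal{L}}\mathrm{CCZ}\big(q^{(1)}_{[v_0v_1]},\,q^{(2)}_{[v_1v_2]},\,q^{(3)}_{[v_2v_3]}\big)=(-1)^{\int_{\mathcal{L}}a^{(1)}\cup a^{(2)}\cup a^{(3)}},$$ the product over all 3-simplices with $v_0\prec v_1\prec v_2\prec v_3$. Then $U$ preserves the code space, and on the code space $$U=\prod_{\alpha^1,\beta^1,\gamma^1\in B^1}\overline{\mathrm{CCZ}}\big[(\alpha^1;1),(\beta^1;2),(\gamma^1;3)\big]^{\int_{\mathcal{M}^3}\alpha^1\cup\beta^1\cup\gamma^1},$$ i.e. a logical CCZ acts on $(\alpha^1;1),(\beta^1;2),(\gamma^1;3)$ exactly when the Poincaré-dual 2-cycles have $\mathbb{Z}_2$ triple intersection number $1$.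
   Context: Branching structure: an ordering $v_0\prec v_1\prec\cdots$ of the vertices of each simplex, consistent on shared faces. Toric code copy $i$: one qubit $q^{(i)}_e$ per edge $e$; $X$-stabilizers $\prod_{e\ni v}X^{(i)}_e$ for each vertex $v$; $Z$-stabilizers $\prod_{e\subset f}Z^{(i)}_e$ for each triangle $f$. The operator-valued 1-cochain $a^{(i)}$ with values in $\{0,1\}$ is defined by $(-1)^{a^{(i)}(e)}=Z^{(i)}_e$; the cup product of cochains on an ordered simplex is $(\alpha^p\cup\beta^q)([v_0\cdots v_{p+q}])=\alpha^p([v_0\cdots v_p])\beta^q([v_p\cdots v_{p+q}])$, and $\int_{\mathcal{L}}$ is the sum over all 3-simplices mod 2. On the code space $da^{(i)}=0$, and the class of $a^{(i)}$ in $H^1(\mathcal{M}^3;\mathbb{Z}_2)$ is measured by logical $Z$ operators. Fix a basis $B^1$ of $H^1(\mathcal{M}^3;\mathbb{Z}_2)$; writing $[a^{(1)}]=\sum_\alpha n_\alpha\alpha^1$, $[a^{(2)}]=\sum_\beta m_\beta\beta^1$, $[a^{(3)}]=\sum_\gamma l_\gamma\gamma^1$ with $n_\alpha,m_\beta,l_\gamma\in\{0,1\}$, the logical qubit $(\alpha^1;1)$ has logical computational basis value $n_\alpha$ (similarly for $(\beta^1;2),(\gamma^1;3)$), and $\overline{\mathrm{CCZ}}[(\alpha^1;1),(\beta^1;2),(\gamma^1;3)]$ acts as $(-1)^{n_\alpha m_\beta l_\gamma}$. *)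

(* Quantum states are functions from the
   computational (Z-) basis configurations of all qubits to algC (complex
   algebraic numbers); operators are maps on such functions. *)
From HB Require Import structures.
From mathcomp Require Import all_boot all_order all_algebra.
From mathcomp Require Import algC.
Set Implicit Arguments. Unset Strict Implicit. Unset Printing Implicit Defensive.
Import Order.TTheory GRing.Theory Num.Theory.

Section Defs.
Variable V : finType.

Definition simplices (F : {set {set V}}) : {set {set V}} :=
  [set s | (s != set0) && [exists t in F, s \subset t]].
(* the faces with k vertices (k = dimension + 1) *)
Definition skel (F : {set {set V}}) (k : nat) : {set {set V}} :=
  [set s in simplices F | #|s| == k].

Definition euler2 (F : {set {set V}}) : int :=
  (#|skel F 1|%:Z - #|skel F 2|%:Z + #|skel F 3|%:Z)%R.

Definition adj1 (F : {set {set V}}) : rel V := fun a b => [set a; b] \in skel F 2.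

Definition lkadj (F : {set {set V}}) (w : V) : rel V :=
  fun a b => [set w; a; b] \in skel F 3.

(* F (a set of triangles) generates a combinatorial 2-sphere: a connected
   closed surface (every edge in exactly two triangles, every vertex link a
   connected cycle) of Euler characteristic 2. *)
Definition is_sphere2 (F : {set {set V}}) : bool :=
  [&& [forall t in F, #|t| == 3],
      [forall e in skel F 2, #|[set t in F | e \subset t]| == 2],
      [forall w, ([set w] \in skel F 1) ==>
         [forall a, forall b,
            (adj1 F w a && adj1 F w b) ==> connect (lkadj F w) a b]],
      [forall a, forall b,
         (([set a] \in skel F 1) && ([set b] \in skel F 1)) ==> connect (adj1 F) a b]
    & euler2 F == 2%R].

Definition link_tris (T : {set {set V}}) (v : V) : {set {set V}} :=
  [set t :\ v | t in T & v \in t].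

(* T is (the set of 3-simplices of) a triangulation of a closed 3-manifold:
   a finite pure 3-dimensional simplicial complex in which the link of every
   vertex is a combinatorial 2-sphere. *)
Definition closed3manifold (T : {set {set V}}) : bool :=
  [forall t in T, #|t| == 4] &&
  [forall v, ([set v] \in skel T 1) ==> is_sphere2 (link_tris T v)].

(* o u w means u precedes w; on every edge exactly one orientation, and no
   triangle carries a directed 3-cycle, i.e. o restricts to a total order on
   every simplex, consistently on shared faces. *)
Definition branching (T : {set {set V}}) (o : rel V) : bool :=
  [forall e in skel T 2, forall u in e, forall w in e,
     (u != w) ==> (o u w != o w u)] &&
  [forall f in skel T 3, forall a in f, forall b in f, forall c in f,
     [&& a != b, b != c & a != c] ==> ~~ [&& o a b, o b c & o c a]].

(* position of v among the vertices of s (0-based) *)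
Definition rankv (o : rel V) (s : {set V}) (v : V) : nat :=
  #|[set w in s | (w != v) && o w v]|.
Definition vtx (o : rel V) (s : {set V}) (k : nat) : option V :=
  [pick v in s | rankv o s v == k].
Definition face (o : rel V) (s : {set V}) (ks : seq nat) : {set V} :=
  [set v | Some v \in map (vtx o s) ks].

Definition cochain := {set V} -> bool.
Definition cup (o : rel V) (p q : nat) (a b : cochain) : cochain :=
  fun s => a (face o s (iota 0 p.+1)) && b (face o s (iota p q.+1)).
Definition cup3 (o : rel V) (a b c : cochain) : cochain :=
  cup o 2 1 (cup o 1 1 a b) c.
Definition integral (T : {set {set V}}) (c : cochain) : bool :=
  \big[addb/false]_(t in T) c t.

Definition Edge (T : {set {set V}}) := {e : {set V} | e \in skel T 2}.
Definition copy := 'I_3.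
Definition c1 : copy := @Ordinal 3 0 isT.
Definition c2 : copy := @Ordinal 3 1 isT.
Definition c3 : copy := @Ordinal 3 2 isT.

(* a computational basis configuration: x i e = value of q^(i)_e, with
   (-1)^(x i e) = Z^(i)_e, i.e. x i is the cochain a^(i) *)
Definition config (T : {set {set V}}) := {ffun copy -> {ffun Edge T -> bool}}.
Definition state (T : {set {set V}}) := config T -> algC.

(* extension of an edge-valued function to a cochain (zero off edges) *)
Definition ext (T : {set {set V}}) (x : {ffun Edge T -> bool}) : cochain :=
  fun s => if (insub s : option (Edge T)) is Some e then x e else false.

Definition delta1 (T : {set {set V}}) (c : cochain) (f : {set V}) : bool :=
  \big[addb/false]_(e in skel T 2 | e \subset f) c e.

Definition flip (T : {set {set V}}) (x : config T) (i : copy) (v : V) : config T :=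
  [ffun j => if j == i then [ffun e : Edge T => x j e (+) (v \in val e)] else x j].
Definition Xstab (T : {set {set V}}) (i : copy) (v : V) (psi : state T) : state T :=
  fun x => psi (flip x i v).
Definition Zstab (T : {set {set V}}) (i : copy) (f : {set V}) (psi : state T) : state T :=
  fun x => ((-1) ^+ delta1 T (ext (x i)) f * psi x)%R.
Definition in_code (T : {set {set V}}) (psi : state T) : Prop :=
  (forall i v, [set v] \in skel T 1 -> forall x, Xstab i v psi x = psi x) /\
  (forall i f, f \in skel T 3 -> forall x, Zstab i f psi x = psi x).

Definition CCZ (T : {set {set V}}) (q1 q2 q3 : copy * Edge T) (psi : state T) : state T :=
  fun x => ((-1) ^+ [&& x q1.1 q1.2, x q2.1 q2.2 & x q3.1 q3.2] * psi x)%R.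
Definition tet_gate (T : {set {set V}}) (o : rel V) (t : {set V}) (psi : state T) : state T :=
  match (insub (face o t [:: 0; 1]) : option (Edge T)),
        (insub (face o t [:: 1; 2]) : option (Edge T)),
        (insub (face o t [:: 2; 3]) : option (Edge T)) with
  | Some e1, Some e2, Some e3 => CCZ (c1, e1) (c2, e2) (c3, e3) psi
  | _, _, _ => psi
  end.
Definition Ucirc (T : {set {set V}}) (o : rel V) (psi : state T) : state T :=
  foldr (fun t acc => tet_gate o t acc) psi (enum T).

Definition cocycle (T : {set {set V}}) (c : {ffun Edge T -> bool}) : bool :=
  [forall f in skel T 3, ~~ delta1 T (ext c) f].
Definition cohomologous (T : {set {set V}}) (c c' : {ffun Edge T -> bool}) : bool :=
  [exists g : {ffun V -> bool},
     [forall e : Edge T, (c e (+) c' e) == \big[addb/false]_(v in val e) g v]].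
Definition lincomb (T : {set {set V}}) (nb : nat) (B : 'I_nb -> {ffun Edge T -> bool})
    (n : {ffun 'I_nb -> bool}) : {ffun Edge T -> bool} :=
  [ffun e => \big[addb/false]_(k < nb) (n k && B k e)].
Definition H1basis (T : {set {set V}}) (nb : nat) (B : 'I_nb -> {ffun Edge T -> bool}) : Prop :=
  (forall k, cocycle (B k)) /\
  (forall c, cocycle c -> exists! n : {ffun 'I_nb -> bool}, cohomologous c (lincomb B n)).
Definition coord (T : {set {set V}}) (nb : nat) (B : 'I_nb -> {ffun Edge T -> bool})
    (c : {ffun Edge T -> bool}) : {ffun 'I_nb -> bool} :=
  odflt [ffun => false] [pick n : {ffun 'I_nb -> bool} | cohomologous c (lincomb B n)].

Definition LCCZ (T : {set {set V}}) (nb : nat) (B : 'I_nb -> {ffun Edge T -> bool})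
    (abg : 'I_nb * 'I_nb * 'I_nb) (psi : state T) : state T :=
  fun x => ((-1) ^+ [&& coord B (x c1) abg.1.1, coord B (x c2) abg.1.2
                     & coord B (x c3) abg.2] * psi x)%R.
Definition triple (T : {set {set V}}) (o : rel V) (nb : nat)
    (B : 'I_nb -> {ffun Edge T -> bool}) (abg : 'I_nb * 'I_nb * 'I_nb) : bool :=
  integral T (cup3 o (ext (B abg.1.1)) (ext (B abg.1.2)) (ext (B abg.2))).
Definition Lprod (T : {set {set V}}) (o : rel V) (nb : nat)
    (B : 'I_nb -> {ffun Edge T -> bool}) (psi : state T) : state T :=
  foldr (fun abg acc => iter (triple o B abg) (LCCZ B abg) acc) psi
        (enum {: 'I_nb * 'I_nb * 'I_nb}).

End Defs.

(* A gate of U acts on a computational basis state x by the phase (-1)^(a1(v0v1) a2(v1v2)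
   a3(v2v3)), which the branching order identifies with (a1 \cup a2 \cup a3)[v0v1v2v3]; so U is
   the phase (-1)^(int a1 \cup a2 \cup a3).  On the code space the Z-stabilizers force every
   a^(i) carrying amplitude to be a cocycle, and the integral of a triple cup product of
   cocycles only depends on their cohomology classes: replacing a by a + dg changes the
   integrand on each tetrahedron by the coboundary of the 2-cochain g \cup b \cup c, and the
   integral of a coboundary vanishes because on a closed 3-manifold each triangle f lies in
   exactly two tetrahedra (for a vertex v of f, the edge f\v of the 2-sphere link of v lies in
   exactly two triangles).  The X-stabilizers shift one a^(i) by a coboundary, so U preserves
   the code space; expanding each class in the basis B by trilinearity yields the logical CCZ
   gates weighted by int alpha \cup beta \cup gamma. *)

From Pilot Require Import Defs.
From HB Require Import structures.
From mathcomp Require Import all_boot all_order all_algebra algC.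
Import GRing.Theory Num.Theory.
Set Implicit Arguments. Unset Strict Implicit. Unset Printing Implicit Defensive.

Section VertexOrder.
Variables (V : finType) (o : rel V).

Definition precedes (u w : V) := [&& u != w, o u w & ~~ o w u].

Lemma precedes_neq u w : precedes u w -> u != w.
Proof. by case/and3P. Qed.

Lemma precedes_irr : irreflexive precedes.
Proof. by move=> u; rewrite /precedes eqxx. Qed.

Lemma rankv_seq (l : seq V) (s : {set V}) v : uniq l -> s =i l ->
  rankv o s v = count [pred w | (w != v) && o w v] l.
Proof.
move=> ul sl; rewrite /rankv -size_filter -(card_uniqP (filter_uniq _ ul)).
by apply: eq_card => w; rewrite !inE mem_filter sl andbC.
Qed.

Lemma count_rank_sorted (l : seq V) : pairwise precedes l ->
  map (fun v => count [pred w | (w != v) && o w v] l) l = iota 0 (size l).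
Proof.
elim: l => //= x l IH /andP[/allP xl /IH {}IH].
rewrite eqxx /= add0n; congr (_ :: _).
  rewrite (eq_in_count (a2 := pred0)) ?count_pred0 //.
  by move=> w /xl /and3P[_ _ /negbTE owx] /=; rewrite owx andbF.
rewrite -[1]addn0 iotaDl -IH -map_comp.
by apply/eq_in_map => v /xl /and3P[xv oxv _] /=; rewrite xv oxv.
Qed.

Lemma vtx_sorted (l : seq V) (s : {set V}) k x0 : pairwise precedes l -> s =i l ->
  k < size l -> vtx o s k = Some (nth x0 l k).
Proof.
move=> pl sl kl; have ul := pairwise_uniq precedes_irr pl.
have rk j : j < size l -> rankv o s (nth x0 l j) = j.
  move=> jl; have := congr1 (fun m => nth 0 m j) (count_rank_sorted pl).
  by rewrite /= (nth_map x0) // nth_iota // (rankv_seq _ ul sl).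
rewrite /vtx; case: pickP => [w /andP[ws /eqP rw] | none].
  have wl : w \in l by rewrite -sl.
  have := rk (index w l); rewrite index_mem nth_index // => /(_ wl) wk.
  by rewrite -rw wk nth_index.
by have := none (nth x0 l k); rewrite sl mem_nth //= rk // eqxx.
Qed.

Lemma face_pair s i j a b : vtx o s i = Some a -> vtx o s j = Some b ->
  face o s [:: i; j] = [set a; b].
Proof. by move=> hi hj; apply/setP=> x; rewrite /face !inE hi hj. Qed.

Lemma face_triple s i j k a b c : vtx o s i = Some a -> vtx o s j = Some b ->
  vtx o s k = Some c -> face o s [:: i; j; k] = [set a; b; c].
Proof. by move=> hi hj hk; apply/setP=> x; rewrite /face !inE hi hj hk !orbA. Qed.

Section SortedTriangle.
Variables a b c : V.
Hypothesis sorted_abc : pairwise precedes [:: a; b; c].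

Lemma vtx_triangle k : k < 3 -> vtx o [set a; b; c] k = Some (nth a [:: a; b; c] k).
Proof. by move=> k3; apply: vtx_sorted => // x; rewrite !inE orbA. Qed.

Lemma face01_triangle : face o [set a; b; c] [:: 0; 1] = [set a; b].
Proof. by apply: face_pair; apply: vtx_triangle. Qed.

Lemma face12_triangle : face o [set a; b; c] [:: 1; 2] = [set b; c].
Proof. by apply: face_pair; apply: vtx_triangle. Qed.
End SortedTriangle.

Section SortedTetrahedron.
Variables w0 w1 w2 w3 : V.
Hypothesis sorted_tet : pairwise precedes [:: w0; w1; w2; w3].

Lemma vtx_tet k : k < 4 ->
  vtx o [set w0; w1; w2; w3] k = Some (nth w0 [:: w0; w1; w2; w3] k).
Proof. by move=> k4; apply: vtx_sorted => // x; rewrite !inE !orbA. Qed.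

Lemma face01_tet : face o [set w0; w1; w2; w3] [:: 0; 1] = [set w0; w1].
Proof. by apply: face_pair; apply: vtx_tet. Qed.

Lemma face12_tet : face o [set w0; w1; w2; w3] [:: 1; 2] = [set w1; w2].
Proof. by apply: face_pair; apply: vtx_tet. Qed.

Lemma face23_tet : face o [set w0; w1; w2; w3] [:: 2; 3] = [set w2; w3].
Proof. by apply: face_pair; apply: vtx_tet. Qed.

Lemma cup3_tet (x y z : cochain V) : cup3 o x y z [set w0; w1; w2; w3] =
  [&& x [set w0; w1], y [set w1; w2] & z [set w2; w3]].
Proof.
have sorted012 : pairwise precedes [:: w0; w1; w2].
  by move: sorted_tet; rewrite /= !andbT => /and3P[/and3P[-> -> _] /andP[-> _] _].
have face012 : face o [set w0; w1; w2; w3] [:: 0; 1; 2] = [set w0; w1; w2].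
  by apply: face_triple; apply: vtx_tet.
rewrite /cup3 /cup /= face012 face23_tet face01_triangle // face12_triangle //.
by rewrite andbA.
Qed.
End SortedTetrahedron.
End VertexOrder.

Section Complex.
Variables (V : finType) (T : {set {set V}}).

Lemma skel_subset (t s : {set V}) k : t \in T -> s \subset t -> s != set0 -> #|s| = k ->
  s \in skel T k.
Proof.
move=> tT st s0 sk; rewrite /skel /simplices !inE s0 sk eqxx andbT /=.
by apply/existsP; exists t; rewrite tT.
Qed.

Lemma skel_facet (s : {set V}) k : s \in skel T k -> exists2 t, t \in T & s \subset t.
Proof.
by rewrite /skel /simplices !inE => /andP[/andP[_ /existsP[t /andP[tT st]]] _]; exists t.
Qed.

Lemma skel_pair (t : {set V}) u w : t \in T -> u \in t -> w \in t -> u != w ->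
  [set u; w] \in skel T 2.
Proof.
move=> tT ut wt uw; apply: (skel_subset tT); last by rewrite cards2 uw.
  by rewrite subUset !sub1set ut wt.
by apply/set0Pn; exists u; rewrite !inE eqxx.
Qed.

Lemma skel_triple (t : {set V}) a b c : t \in T -> a \in t -> b \in t -> c \in t ->
  a != b -> b != c -> a != c -> [set a; b; c] \in skel T 3.
Proof.
move=> tT a_t bt ct ab bc ac; apply: (skel_subset tT).
- by rewrite !subUset !sub1set a_t bt ct.
- by apply/set0Pn; exists a; rewrite !inE eqxx.
- by rewrite -setUA cardsU1 cards2 !inE bc negb_or ab ac.
Qed.

Section Branching.
Variable o : rel V.
Hypothesis hbr : branching T o.

Lemma branching_edge (t : {set V}) u w : t \in T -> u \in t -> w \in t -> u != w ->
  o u w != o w u.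
Proof.
move=> tT ut wt uw; case/andP: hbr => /forall_inP hE _.
have /forall_inP/(_ u) := hE _ (skel_pair tT ut wt uw).
rewrite !inE eqxx => /(_ isT)/forall_inP/(_ w).
by rewrite !inE eqxx orbT => /(_ isT)/implyP; apply.
Qed.

Lemma branching_triangle (t : {set V}) a b c : t \in T -> a \in t -> b \in t -> c \in t ->
  a != b -> b != c -> a != c -> ~~ [&& o a b, o b c & o c a].
Proof.
move=> tT a_t bt ct ab bc ac; case/andP: hbr => _ /forall_inP hF.
have /forall_inP/(_ a) := hF _ (skel_triple tT a_t bt ct ab bc ac).
rewrite !inE eqxx => /(_ isT)/forall_inP/(_ b).
rewrite !inE eqxx orbT => /(_ isT)/forall_inP/(_ c).
by rewrite !inE eqxx !orbT => /(_ isT)/implyP; apply; rewrite ab bc ac.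
Qed.

Lemma branching_tet_sorted (t : {set V}) : #|t| = 4 -> t \in T ->
  exists w0 w1 w2 w3, t = [set w0; w1; w2; w3] /\
    pairwise (precedes o) [:: w0; w1; w2; w3].
Proof.
move=> t4 tT; pose le u w := (u == w) || precedes o u w.
have total_le : {in t &, total le}.
  move=> u w ut wt; rewrite /le /precedes.
  have [->|uw] := eqVneq u w; first by rewrite orbT.
  have := branching_edge tT ut wt uw.
  by case: (o u w); case: (o w u).
have trans_le : {in t & &, transitive le}.
  move=> b a c bt a_t ct; rewrite /le.
  have [->|ab] := eqVneq a b; first by [].
  have [<-|bc] := eqVneq b c; first by move=> /= ->; rewrite orbT.
  rewrite /precedes ab bc /= => /andP[oab nba] /andP[obc ncb].
  have [eac|ac] /= := eqVneq a c; first by subst; rewrite oab in ncb.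
  have := branching_triangle tT a_t bt ct ab bc ac; rewrite oab obc /= => nca.
  by have := branching_edge tT a_t ct ac; rewrite (negbTE nca); case: (o a c).
set s := sort le (enum t).
have ts : t =i s by move=> x; rewrite mem_sort mem_enum.
have s_t : all (mem t) s by apply/allP=> x; rewrite -ts.
have sorted_s : pairwise (precedes o) s.
  have le_s : pairwise le s.
    rewrite -(sorted_pairwise_in trans_le s_t) (sort_sorted_in total_le) //.
    by apply/allP=> x; rewrite mem_enum.
  have := sort_uniq le (enum t); rewrite enum_uniq uniq_pairwise => neq_s.
  have : pairwise [rel u w | le u w && (u != w)] s by rewrite pairwise_relI le_s.
  by apply: sub_pairwise => u w /andP[/orP[/eqP->|]]; rewrite ?eqxx.
have : size s = 4 by rewrite size_sort -cardE.
case: s ts sorted_s {s_t} => [|w0 [|w1 [|w2 [|w3 [|? ?]]]]] // ts sorted_s _.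
by exists w0, w1, w2, w3; split=> //; apply/setP=> x; rewrite ts !inE -!orbA.
Qed.
End Branching.
End Complex.

Section Facets.
Variable V : finType.

Definition delta2 (w : cochain V) : cochain V :=
  fun t => \big[addb/false]_(x in t) w (t :\ x).

Lemma delta2E (w : cochain V) (t : {set V}) : 0 < #|t| ->
  delta2 w t = \big[addb/false]_(f : {set V} | (f \subset t) && (#|f| == #|t|.-1)) w f.
Proof.
move=> t_gt0; have inj : {in t &, injective (fun x => t :\ x)}.
  by move=> x y xt _ /setP/(_ x); rewrite !inE eqxx xt; case: eqVneq.
rewrite /delta2 -(big_imset _ inj); apply: eq_bigl => f; apply/imsetP/andP.
  case=> x xt ->; split; first exact: subD1set.
  by rewrite (cardsD1 x t) xt.
case=> ft /eqP tf.
have /eqP/cards1P[x tfx] : #|t :\: f| = 1.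
  by rewrite cardsD (setIidPr ft) tf -{1}(prednK t_gt0) subSnn.
have : x \in t :\: f by rewrite tfx set11.
rewrite inE => /andP[_ xt]; exists x => //.
by rewrite -tfx setDDr setDv set0U; apply/esym/setIidPr.
Qed.

Lemma link_tris_containing (T : {set {set V}}) (f : {set V}) a : a \in f ->
  [set s in link_tris T a | f :\ a \subset s] =
  [set t :\ a | t in [set t in T | f \subset t]].
Proof.
move=> af; apply/setP=> s; rewrite inE; apply/andP/imsetP.
  case=> /imsetP[t /[!inE] /andP[tT a_t] ->] fat; exists t => //.
  rewrite inE tT; apply/subsetP=> y yf.
  have [->//|ya] := eqVneq y a.
  have : y \in f :\ a by rewrite !inE ya yf.
  by move/(subsetP fat); rewrite !inE => /andP[].
case=> t /[!inE] /andP[tT ft] ->; split; last exact: setSD.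
by apply/imsetP; exists t; rewrite // inE tT (subsetP ft a af).
Qed.

Lemma setD1_triangle (a b c : V) : uniq [:: a; b; c] ->
  [/\ [set a; b; c] :\ a = [set b; c], [set a; b; c] :\ b = [set a; c] &
      [set a; b; c] :\ c = [set a; b]].
Proof.
rewrite /= !inE !negb_or !andbT => /andP[/andP[nab nac] nbc].
by split; apply/setP=> x; rewrite !inE;
  [have [->|_] := eqVneq x a | have [->|_] := eqVneq x b | have [->|_] := eqVneq x c];
  rewrite /= ?orbF ?(eq_sym b) ?(eq_sym c) ?(negbTE nab) ?(negbTE nac) ?(negbTE nbc).
Qed.

Lemma setD1_tet (w0 w1 w2 w3 : V) : uniq [:: w0; w1; w2; w3] ->
  [/\ [set w0; w1; w2; w3] :\ w0 = [set w1; w2; w3],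
      [set w0; w1; w2; w3] :\ w1 = [set w0; w2; w3],
      [set w0; w1; w2; w3] :\ w2 = [set w0; w1; w3] &
      [set w0; w1; w2; w3] :\ w3 = [set w0; w1; w2]].
Proof.
rewrite /= !inE !negb_or !andbT => /and3P[/and3P[n01 n02 n03] /andP[n12 n13] n23].
by split; apply/setP=> x; rewrite !inE;
  [have [->|_] := eqVneq x w0 | have [->|_] := eqVneq x w1
  |have [->|_] := eqVneq x w2 | have [->|_] := eqVneq x w3];
  rewrite /= ?orbF ?(eq_sym w1) ?(eq_sym w2) ?(eq_sym w3)
    ?(negbTE n01) ?(negbTE n02) ?(negbTE n03) ?(negbTE n12) ?(negbTE n13) ?(negbTE n23).
Qed.

Lemma delta2_seq (w : cochain V) (l : seq V) (s : {set V}) :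
  uniq l -> s =i l -> delta2 w s = \big[addb/false]_(x <- l) w (s :\ x).
Proof. by move=> ul sl; rewrite /delta2 big_uniq //; apply: eq_bigl. Qed.

Lemma delta2_triangle (w : cochain V) (a b c : V) : uniq [:: a; b; c] ->
  delta2 w [set a; b; c] = w [set b; c] (+) w [set a; c] (+) w [set a; b].
Proof.
move=> uabc; rewrite (delta2_seq _ uabc) => [|x]; last by rewrite !inE orbA.
rewrite !big_cons big_nil addbF; have [-> -> ->] := setD1_triangle uabc.
by rewrite addbA.
Qed.

Lemma delta2_tet (w : cochain V) (w0 w1 w2 w3 : V) :
  uniq [:: w0; w1; w2; w3] -> delta2 w [set w0; w1; w2; w3] =
  w [set w1; w2; w3] (+) w [set w0; w2; w3] (+) w [set w0; w1; w3] (+) w [set w0; w1; w2].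
Proof.
move=> u4; rewrite (delta2_seq _ u4) => [|x]; last by rewrite !inE !orbA.
rewrite !big_cons big_nil addbF; have [-> -> -> ->] := setD1_tet u4.
by rewrite !addbA.
Qed.
End Facets.

Section ClosedManifold.
Variables (V : finType) (T : {set {set V}}).
Hypothesis hM : closed3manifold T.

Lemma card_tet t : t \in T -> #|t| = 4.
Proof. by case/andP: hM => /forall_inP hT _ /hT/eqP. Qed.

Lemma triangle_in_two_tets (f t0 : {set V}) : t0 \in T -> f \subset t0 -> #|f| = 3 ->
  #|[set t in T | f \subset t]| = 2.
Proof.
move=> t0T ft0 f3; have [a af] : exists a, a \in f by apply/card_gt0P; rewrite f3.
have a_t0 := subsetP ft0 a af.
have a_skel : [set a] \in skel T 1.
  apply: (skel_subset t0T); rewrite ?sub1set ?cards1 //.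
  by apply/set0Pn; exists a; rewrite inE.
have /and5P[_ /forall_inP two _ _ _] : is_sphere2 (link_tris T a).
  by case/andP: hM => _ /forallP/(_ a)/implyP; apply.
have fa2 : #|f :\ a| = 2 by move: f3; rewrite (cardsD1 a f) af => -[].
have fa_skel : f :\ a \in skel (link_tris T a) 2.
  apply: (skel_subset (t := t0 :\ a) _ _ _ fa2).
  - by apply/imsetP; exists t0; rewrite // inE t0T.
  - exact: setSD.
  - by apply/set0Pn/card_gt0P; rewrite fa2.
have inj : {in [set t in T | f \subset t] &, injective (fun t => t :\ a)}.
  move=> t t' /[!inE] /andP[_ ft] /andP[_ ft'] tt'.
  by rewrite -(setD1K (subsetP ft a af)) -(setD1K (subsetP ft' a af)) tt'.
move/(_ _ fa_skel)/eqP: two => <-.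
by rewrite link_tris_containing // card_in_imset.
Qed.

Lemma integral_delta2 (w : cochain V) : integral T (delta2 w) = false.
Proof.
rewrite /integral (eq_bigr (fun t : {set V} =>
  \big[addb/false]_(f : {set V} | (f \subset t) && (#|f| == 3)) w f)); last first.
  by move=> t tT; rewrite delta2E card_tet.
rewrite (exchange_big_dep (fun f : {set V} => #|f| == 3)); last first.
  by move=> t f _ /andP[].
apply: big1 => f /eqP f3.
have [t0 /andP[t0T ft0] | none] := pickP [pred t in T | f \subset t].
  rewrite (eq_bigl [in [set t in T | f \subset t]]) => [|t]; last by rewrite !inE f3 andbT.
  by rewrite big_const (triangle_in_two_tets t0T ft0 f3) /=; case: (w f).
by apply: big_pred0 => t; rewrite f3 andbT; apply: none.
Qed.
End ClosedManifold.

Section Cochains.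
Variables (V : finType) (T : {set {set V}}) (o : rel V).
Hypotheses (hM : closed3manifold T) (hbr : branching T o).

Definition addc (a a' : {ffun Edge T -> bool}) : {ffun Edge T -> bool} :=
  [ffun e => a e (+) a' e].

Definition delta0 (g : V -> bool) : {ffun Edge T -> bool} :=
  [ffun e : Edge T => \big[addb/false]_(v in val e) g v].

Definition int_cup3 (a b c : {ffun Edge T -> bool}) : bool :=
  integral T (cup3 o (ext a) (ext b) (ext c)).

Lemma ext_addc a a' s : ext (addc a a') s = ext a s (+) ext a' s.
Proof. by rewrite /ext; case: insub => //= e; rewrite ffunE. Qed.

Lemma ext_delta0 g u w : u != w -> [set u; w] \in skel T 2 ->
  ext (delta0 g) [set u; w] = g u (+) g w.
Proof.
move=> uw uw_skel; rewrite /ext; case: insubP => [e _ ev|]; last by rewrite uw_skel.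
by rewrite ffunE ev big_setU1 ?big_set1 // inE.
Qed.

Lemma delta1_delta2 (x : cochain V) f : f \in skel T 3 -> delta1 T x f = delta2 x f.
Proof.
move=> f_skel; have [t tT ft] := skel_facet f_skel.
have f3 : #|f| = 3 by move: f_skel; rewrite inE => /andP[_ /eqP].
rewrite delta2E ?f3 // /delta1; apply: eq_bigl => e; apply/andP/andP.
  by case=> e_skel ef; split=> //; move: e_skel; rewrite inE => /andP[_].
case=> ef /eqP e2; split=> //; apply: (skel_subset tT (subset_trans ef ft) _ e2).
by apply/set0Pn/card_gt0P; rewrite e2.
Qed.

Lemma cocycle_triangle (c : {ffun Edge T -> bool}) a b d : cocycle c ->
  uniq [:: a; b; d] -> [set a; b; d] \in skel T 3 ->
  ext c [set a; d] = ext c [set a; b] (+) ext c [set b; d].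
Proof.
move=> /forall_inP cc uabd abd_skel; have := cc _ abd_skel.
rewrite delta1_delta2 // delta2_triangle // => /negbTE.
by case: (ext c [set a; b]); case: (ext c [set b; d]); case: (ext c [set a; d]).
Qed.

Definition vtx_val (g : V -> bool) (s : {set V}) k : bool :=
  if vtx o s k is Some v then g v else false.

(* The 2-cochains g \cup b \cup c, a \cup g \cup c and a \cup b \cup g for a 0-cochain g.
   When the other two arguments are cocycles, the Leibniz rule makes their coboundaries
   (dg) \cup b \cup c, a \cup (dg) \cup c and a \cup b \cup (dg). *)
Definition cup3v1 (g : V -> bool) (b c : cochain V) : cochain V :=
  fun s => [&& vtx_val g s 0, b (face o s [:: 0; 1]) & c (face o s [:: 1; 2])].
Definition cup3v2 (a : cochain V) (g : V -> bool) (c : cochain V) : cochain V :=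
  fun s => [&& a (face o s [:: 0; 1]), vtx_val g s 1 & c (face o s [:: 1; 2])].
Definition cup3v3 (a b : cochain V) (g : V -> bool) : cochain V :=
  fun s => [&& a (face o s [:: 0; 1]), b (face o s [:: 1; 2]) & vtx_val g s 2].

Section SortedTriangle.
Variables (u w z : V) (g : V -> bool) (a b : cochain V).
Hypothesis sorted_uwz : pairwise (precedes o) [:: u; w; z].

Lemma cup3v1_triangle : cup3v1 g a b [set u; w; z] = [&& g u, a [set u; w] & b [set w; z]].
Proof. by rewrite /cup3v1 /vtx_val vtx_triangle // face01_triangle // face12_triangle. Qed.

Lemma cup3v2_triangle : cup3v2 a g b [set u; w; z] = [&& a [set u; w], g w & b [set w; z]].
Proof. by rewrite /cup3v2 /vtx_val vtx_triangle // face01_triangle // face12_triangle. Qed.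

Lemma cup3v3_triangle : cup3v3 a b g [set u; w; z] = [&& a [set u; w], b [set w; z] & g z].
Proof. by rewrite /cup3v3 /vtx_val vtx_triangle // face01_triangle // face12_triangle. Qed.
End SortedTriangle.

(* The Leibniz rule on one tetrahedron [v0 v1 v2 v3], with the cocycle conditions
   b02 = b01 + b12 and c13 = c12 + c23 already substituted. *)
Lemma leibniz1 : forall g0 g1 b01 b12 c12 c23 : bool,
  [&& g0 (+) g1, b12 & c23] = [&& g1, b12 & c23] (+) [&& g0, b01 (+) b12 & c23]
    (+) [&& g0, b01 & c12 (+) c23] (+) [&& g0, b01 & c12].
Proof. by do !case. Qed.

Lemma leibniz2 : forall g1 g2 a01 a12 c12 c23 : bool,
  [&& a01, g1 (+) g2 & c23] = [&& a12, g2 & c23] (+) [&& a01 (+) a12, g2 & c23]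
    (+) [&& a01, g1 & c12 (+) c23] (+) [&& a01, g1 & c12].
Proof. by do !case. Qed.

Lemma leibniz3 : forall g2 g3 a01 a12 b12 b23 : bool,
  [&& a01, b12 & g2 (+) g3] = [&& a12, b23 & g3] (+) [&& a01 (+) a12, b23 & g3]
    (+) [&& a01, b12 (+) b23 & g3] (+) [&& a01, b12 & g2].
Proof. by do !case. Qed.

Section SortedTetrahedron.
Variables w0 w1 w2 w3 : V.
Hypotheses (sorted_tet : pairwise (precedes o) [:: w0; w1; w2; w3])
  (tT : [set w0; w1; w2; w3] \in T).

Let uniq_tet := pairwise_uniq (@precedes_irr _ o) sorted_tet.

Let sorted_tet_faces : [/\ pairwise (precedes o) [:: w1; w2; w3],
  pairwise (precedes o) [:: w0; w2; w3], pairwise (precedes o) [:: w0; w1; w3] &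
  pairwise (precedes o) [:: w0; w1; w2]].
Proof.
by move: sorted_tet; rewrite /= !andbT => /and3P[/and3P[-> -> ->] /andP[-> ->] ->].
Qed.

Let uniq123 : uniq [:: w1; w2; w3].
Proof.
by have [s123 _ _ _] := sorted_tet_faces; apply: pairwise_uniq s123; apply: precedes_irr.
Qed.

Let uniq012 : uniq [:: w0; w1; w2].
Proof.
by have [_ _ _ s012] := sorted_tet_faces; apply: pairwise_uniq s012; apply: precedes_irr.
Qed.

Let neq_path : [/\ w0 != w1, w1 != w2 & w2 != w3].
Proof.
move: sorted_tet => /= /and4P[/and4P[/precedes_neq -> _ _ _] /and3P[/precedes_neq -> _ _]].
by case/andP=> /precedes_neq ->.
Qed.

Let triangle_skel a b c : uniq [:: a; b; c] -> a \in [set w0; w1; w2; w3] ->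
  b \in [set w0; w1; w2; w3] -> c \in [set w0; w1; w2; w3] -> [set a; b; c] \in skel T 3.
Proof.
move=> uabc a_t bt ct; have [ab ac bc] : [/\ a != b, a != c & b != c].
  by move: uabc; rewrite /= !inE !negb_or andbT => /andP[/andP[-> ->] ->].
exact: skel_triple tT a_t bt ct ab bc ac.
Qed.

Lemma cup3_delta0_tet1 g (b c : {ffun Edge T -> bool}) : cocycle b -> cocycle c ->
  cup3 o (ext (delta0 g)) (ext b) (ext c) [set w0; w1; w2; w3] =
  delta2 (cup3v1 g (ext b) (ext c)) [set w0; w1; w2; w3].
Proof.
move=> cb cc; have [s123 s023 s013 s012] := sorted_tet_faces.
have [n01 _ _] := neq_path.
rewrite cup3_tet // (delta2_tet _ uniq_tet) !cup3v1_triangle //.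
rewrite ext_delta0 ?(skel_pair tT) ?inE ?eqxx ?orbT //.
rewrite (cocycle_triangle cb uniq012) ?triangle_skel ?inE ?eqxx ?orbT //.
rewrite (cocycle_triangle cc uniq123) ?triangle_skel ?inE ?eqxx ?orbT //.
exact: leibniz1.
Qed.

Lemma cup3_delta0_tet2 g (a c : {ffun Edge T -> bool}) : cocycle a -> cocycle c ->
  cup3 o (ext a) (ext (delta0 g)) (ext c) [set w0; w1; w2; w3] =
  delta2 (cup3v2 (ext a) g (ext c)) [set w0; w1; w2; w3].
Proof.
move=> ca cc; have [s123 s023 s013 s012] := sorted_tet_faces.
have [_ n12 _] := neq_path.
rewrite cup3_tet // (delta2_tet _ uniq_tet) !cup3v2_triangle //.
rewrite ext_delta0 ?(skel_pair tT) ?inE ?eqxx ?orbT //.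
rewrite (cocycle_triangle ca uniq012) ?triangle_skel ?inE ?eqxx ?orbT //.
rewrite (cocycle_triangle cc uniq123) ?triangle_skel ?inE ?eqxx ?orbT //.
exact: leibniz2.
Qed.

Lemma cup3_delta0_tet3 g (a b : {ffun Edge T -> bool}) : cocycle a -> cocycle b ->
  cup3 o (ext a) (ext b) (ext (delta0 g)) [set w0; w1; w2; w3] =
  delta2 (cup3v3 (ext a) (ext b) g) [set w0; w1; w2; w3].
Proof.
move=> ca cb; have [s123 s023 s013 s012] := sorted_tet_faces.
have [_ _ n23] := neq_path.
rewrite cup3_tet // (delta2_tet _ uniq_tet) !cup3v3_triangle //.
rewrite ext_delta0 ?(skel_pair tT) ?inE ?eqxx ?orbT //.
rewrite (cocycle_triangle ca uniq012) ?triangle_skel ?inE ?eqxx ?orbT //.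
rewrite (cocycle_triangle cb uniq123) ?triangle_skel ?inE ?eqxx ?orbT //.
exact: leibniz3.
Qed.

End SortedTetrahedron.

Lemma integral_eq_tets (f f' : cochain V) :
  (forall w0 w1 w2 w3, pairwise (precedes o) [:: w0; w1; w2; w3] ->
     [set w0; w1; w2; w3] \in T -> f [set w0; w1; w2; w3] = f' [set w0; w1; w2; w3]) ->
  integral T f = integral T f'.
Proof.
move=> ff'; apply: eq_bigr => t tT.
have [w0 [w1 [w2 [w3 [et sorted_t]]]]] := branching_tet_sorted hbr (card_tet hM tT) tT.
by rewrite et ff' // -et.
Qed.

Lemma int_cup3_delta0_1 g b c : cocycle b -> cocycle c -> int_cup3 (delta0 g) b c = false.
Proof.
move=> cb cc; rewrite -(integral_delta2 hM (cup3v1 g (ext b) (ext c))).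
by apply: integral_eq_tets => *; apply: cup3_delta0_tet1.
Qed.

Lemma int_cup3_delta0_2 g a c : cocycle a -> cocycle c -> int_cup3 a (delta0 g) c = false.
Proof.
move=> ca cc; rewrite -(integral_delta2 hM (cup3v2 (ext a) g (ext c))).
by apply: integral_eq_tets => *; apply: cup3_delta0_tet2.
Qed.

Lemma int_cup3_delta0_3 g a b : cocycle a -> cocycle b -> int_cup3 a b (delta0 g) = false.
Proof.
move=> ca cb; rewrite -(integral_delta2 hM (cup3v3 (ext a) (ext b) g)).
by apply: integral_eq_tets => *; apply: cup3_delta0_tet3.
Qed.

Lemma int_cup3_addc1 a a' b c :
  int_cup3 (addc a a') b c = int_cup3 a b c (+) int_cup3 a' b c.
Proof.
rewrite /int_cup3 /integral -big_split; apply: eq_bigr => t _.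
by rewrite /cup3 /cup !ext_addc !andb_addl.
Qed.

Lemma int_cup3_addc2 a b b' c :
  int_cup3 a (addc b b') c = int_cup3 a b c (+) int_cup3 a b' c.
Proof.
rewrite /int_cup3 /integral -big_split; apply: eq_bigr => t _.
by rewrite /cup3 /cup !ext_addc andb_addr andb_addl.
Qed.

Lemma int_cup3_addc3 a b c c' :
  int_cup3 a b (addc c c') = int_cup3 a b c (+) int_cup3 a b c'.
Proof.
rewrite /int_cup3 /integral -big_split; apply: eq_bigr => t _.
by rewrite /cup3 /cup !ext_addc andb_addr.
Qed.

Local Open Scope ring_scope.

Lemma tet_gate_phase t (psi : state T) x : t \in T ->
  tet_gate o t psi x = (-1) ^+ cup3 o (ext (x c1)) (ext (x c2)) (ext (x c3)) t * psi x.
Proof.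
move=> tT.
have [w0 [w1 [w2 [w3 [-> sorted_t]]]]] := branching_tet_sorted hbr (card_tet hM tT) tT.
rewrite cup3_tet // /tet_gate face01_tet // face12_tet // face23_tet // /ext.
case: (insub [set w0; w1]) => [e1|]; last by rewrite expr0 mul1r.
case: (insub [set w1; w2]) => [e2|]; last by rewrite andbF expr0 mul1r.
by case: (insub [set w2; w3]) => [e3|]; last by rewrite !andbF expr0 mul1r.
Qed.

Lemma Ucirc_phase (psi : state T) x :
  Ucirc o psi x = (-1) ^+ int_cup3 (x c1) (x c2) (x c3) * psi x.
Proof.
rewrite /Ucirc /int_cup3 /integral -big_enum.
have : all [in T] (enum T) by apply/allP=> t; rewrite mem_enum.
elim: (enum T) => [|t l IH] /=; first by rewrite big_nil expr0 mul1r.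
case/andP=> tT /IH {}IH.
by rewrite big_cons tet_gate_phase // IH mulrA -signr_addb.
Qed.

Lemma in_code_cocycle (psi : state T) x i : in_code psi -> psi x != 0 -> cocycle (x i).
Proof.
case=> _ hZ psi_x; apply/forall_inP => f f_skel; apply/negP => df.
have := hZ i f f_skel x; rewrite /Zstab df expr1 mulN1r => /eqP.
by rewrite eqNr (negbTE psi_x).
Qed.

Lemma flipE x i v j :
  flip x i v j = if j == i then addc (x j) (delta0 (pred1 v)) else x j.
Proof.
rewrite /flip ffunE; case: (j == i) => //; apply/ffunP => e; rewrite !ffunE.
case: (boolP (v \in val e)) => ve.
  by rewrite (big_setD1 v) //= eqxx big1 // => u; rewrite !inE => /andP[/negbTE].
by rewrite big1 // => u ue; apply: contraNF ve => /eqP <-.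
Qed.

Lemma copy_cases (i : copy) : [\/ i = c1, i = c2 | i = c3].
Proof.
by case: i => -[|[|[|//]]] im; [constructor 1|constructor 2|constructor 3]; apply: val_inj.
Qed.

Lemma in_code_Ucirc (psi : state T) : in_code psi -> in_code (Ucirc o psi).
Proof.
move=> hc; have [hX hZ] := hc; split=> i.
  move=> v v_skel x; have := hX i v v_skel x; rewrite /Xstab !Ucirc_phase => ->.
  have [->|psi_x] := eqVneq (psi x) 0; first by rewrite !mulr0.
  have cc j := in_code_cocycle j hc psi_x.
  congr (_ ^+ _ * _); case: (copy_cases i) => ->; rewrite !flipE /=.
  - by rewrite int_cup3_addc1 int_cup3_delta0_1 ?addbF.
  - by rewrite int_cup3_addc2 int_cup3_delta0_2 ?addbF.
  - by rewrite int_cup3_addc3 int_cup3_delta0_3 ?addbF.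
move=> f f_skel x; rewrite /Zstab !Ucirc_phase mulrCA.
by have := hZ i f f_skel x; rewrite /Zstab => ->.
Qed.

Section Basis.
Variables (nb : nat) (B : 'I_nb -> {ffun Edge T -> bool}).

Lemma ext_lincomb n s :
  ext (lincomb B n) s = \big[addb/false]_(k < nb) (n k && ext (B k) s).
Proof.
rewrite /ext; case: insub => [e|] /=; first by rewrite ffunE.
by rewrite big1 // => k _; rewrite andbF.
Qed.

Lemma int_cup3_lincomb n1 n2 n3 :
  int_cup3 (lincomb B n1) (lincomb B n2) (lincomb B n3) =
  \big[addb/false]_(abg : 'I_nb * 'I_nb * 'I_nb)
     [&& n1 abg.1.1, n2 abg.1.2, n3 abg.2 & int_cup3 (B abg.1.1) (B abg.1.2) (B abg.2)].
Proof.
rewrite /int_cup3 /integral; symmetry.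
under [LHS]eq_bigr => abg _ do rewrite !big_distrr.
rewrite exchange_big; apply: eq_bigr => t _ /=.
rewrite /cup3 /cup !ext_lincomb big_distrlr pair_big big_distrlr pair_big.
apply: eq_bigr => -[[a b] g] _ /=.
by case: (n1 a); case: (n2 b); case: (n3 g); rewrite /= ?andbF.
Qed.

Hypothesis hB : H1basis B.

Lemma cocycle_lincomb n : cocycle (lincomb B n).
Proof.
have [cB _] := hB; apply/forall_inP => f f_skel; rewrite /delta1.
under eq_bigr => e _ do rewrite ext_lincomb.
rewrite exchange_big big1 // => k _; rewrite -big_distrr /=.
by have /forall_inP/(_ f f_skel)/negbTE := cB k; rewrite /delta1 => ->; rewrite andbF.
Qed.

Lemma cocycle_decomp c : cocycle c ->
  exists g, c = addc (lincomb B (Defs.coord B c)) (delta0 g).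
Proof.
move=> cc; have : cohomologous c (lincomb B (Defs.coord B c)).
  rewrite /Defs.coord; case: pickP => [//|none].
  have [_ /(_ c cc)[n [cn _]]] := hB.
  by have := none n; rewrite cn.
case/existsP => g /forallP cg; exists g; apply/ffunP => e.
by rewrite !ffunE -(eqP (cg e)) /lincomb ffunE addbCA addbb addbF.
Qed.

Lemma Lprod_phase (psi : state T) x : Lprod o B psi x =
  (-1) ^+ (\big[addb/false]_(abg : 'I_nb * 'I_nb * 'I_nb)
     (triple o B abg && [&& Defs.coord B (x c1) abg.1.1, Defs.coord B (x c2) abg.1.2
                          & Defs.coord B (x c3) abg.2])) * psi x.
Proof.
rewrite /Lprod -big_enum.
elim: (enum _) => [|abg l IH] /=; first by rewrite big_nil expr0 mul1r.
rewrite big_cons signr_addb -mulrA -IH.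
by case: (triple o B abg) => //=; rewrite expr0 mul1r.
Qed.

Lemma Ucirc_Lprod (psi : state T) : in_code psi ->
  forall x, Ucirc o psi x = Lprod o B psi x.
Proof.
move=> hc x; rewrite Ucirc_phase Lprod_phase.
have [->|psi_x] := eqVneq (psi x) 0; first by rewrite !mulr0.
congr (_ ^+ nat_of_bool _ * _); have cc j := in_code_cocycle j hc psi_x.
set n1 := Defs.coord B (x c1); set n2 := Defs.coord B (x c2); set n3 := Defs.coord B (x c3).
have [g1 e1] := cocycle_decomp (cc c1); have [g2 e2] := cocycle_decomp (cc c2).
have [g3 e3] := cocycle_decomp (cc c3).
rewrite {1}e1 int_cup3_addc1 int_cup3_delta0_1 // addbF.
rewrite {1}e2 int_cup3_addc2 int_cup3_delta0_2 ?cocycle_lincomb // addbF.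
rewrite {1}e3 int_cup3_addc3 int_cup3_delta0_3 ?cocycle_lincomb // addbF.
by rewrite int_cup3_lincomb; apply: eq_bigr => abg _; rewrite [RHS]andbC -!andbA.
Qed.
End Basis.
End Cochains.

Unset Implicit Arguments.

Theorem mainTheorem2 (V : finType) (T : {set {set V}}) (o : rel V)
  (hM : closed3manifold T) (hbr : branching T o)
  (nb : nat) (B : 'I_nb -> {ffun Edge T -> bool}) (hB : H1basis B) :
  (forall (psi : state T) (x : config T),
     Ucirc o psi x =
     ((-1) ^+ integral T (cup3 o (ext (x c1)) (ext (x c2)) (ext (x c3))) * psi x)%R)
  /\ (forall psi : state T, in_code psi -> in_code (Ucirc o psi))
  /\ (forall psi : state T, in_code psi ->
        forall x : config T, Ucirc o psi x = Lprod o B psi x).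
Proof.
split; first exact: Ucirc_phase.
split; first exact: in_code_Ucirc.
exact: Ucirc_Lprod.
Qed.
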